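(* The Vitali equivalence relation $E_V$ on $\mathbb{R}$ is closed graphable with diameter $2$.
   Context: $xE_Vy$ iff $x-y\in\mathbb{Q}$. $E$ is closed graphable with diameter $k$ if there is a simple undirected graph $G\subseteq\mathbb{R}\times\mathbb{R}$, closed in $\mathbb{R}^2$, whose connectedness relation equals $E$ and $k$ is the least integer such that any two $G$-connected points are joined by a path of length at most $k$. *)

From HB Require Import structures.
From mathcomp Require Import all_boot all_order all_algebra.
From mathcomp Require Import all_classical all_reals all_analysis.
From mathcomp Require Import Rstruct Rstruct_topology.

Set Implicit Arguments. Unset Strict Implicit. Unset Printing Implicit Defensive.
Import Order.TTheory GRing.Theory Num.Theory.
Local Open Scope classical_set_scope.
Local Open Scope ring_scope.

Notation Rl := Rdefinitions.R.

Definition vitali (x y : Rl) : Prop := exists q : rat, x - y = ratr q.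

Fixpoint walk (G : Rl -> Rl -> Prop) (n : nat) (x y : Rl) : Prop :=
  match n with
  | O => x = y
  | S m => exists z, G x z /\ walk G m z y
  end.

Definition gconnected (G : Rl -> Rl -> Prop) (x y : Rl) : Prop :=
  exists n, walk G n x y.

Definition simple_graph (G : Rl -> Rl -> Prop) : Prop :=
  (forall x y, G x y -> G y x) /\ (forall x, ~ G x x).

Definition diam_le (G : Rl -> Rl -> Prop) (k : nat) : Prop :=
  forall x y, gconnected G x y -> exists n, leq n k /\ walk G n x y.

Definition closed_graphable_diam (E : Rl -> Rl -> Prop) (k : nat) : Prop :=
  exists G : Rl -> Rl -> Prop,
    [/\ simple_graph G,
        closed [set p : Rl * Rl | G p.1 p.2],
        (forall x y, gconnected G x y <-> E x y),
        diam_le G k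
      & (forall j, diam_le G j -> leq k j)].

From HB Require Import structures.
From mathcomp Require Import all_boot all_order all_algebra.
From mathcomp Require Import all_classical all_reals all_analysis.
From mathcomp Require Import Rstruct Rstruct_topology.
From mathcomp Require Import ring lra zify.
Import Order.TTheory GRing.Theory Num.Theory.
Local Open Scope classical_set_scope.
Local Open Scope ring_scope.

(* Join distinct x and y when d (y - x) is an integer m for some positive
   integer d <= max(|x|, |y|).  For fixed (d, m) these edges form a closed
   subset of the plane, and a neighbourhood of a point meets only finitely many
   of them, so the edge set is closed.  Two Vitali-equivalent points x, y are
   joined through x + N for a large integer N, since |x + N| then exceeds the
   denominator of y - x.  The diameter is not 1: every edge has an endpoint of
   absolute value at least 1, while 0 and 1/2 are equivalent. *)

Lemma closed_bigcup_locally_finite (T : topologicalType) (I : choiceType)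
    (A : set I) (F : I -> set T) :
    (forall i, A i -> closed (F i)) ->
    (forall p : T, exists2 U : set T,
       nbhs p U & finite_set [set i | A i /\ F i `&` U !=set0]) ->
  closed (\bigcup_(i in A) F i).
Proof.
move=> cF locF p clp; have [U pU finS] := locF p.
have [i [Ai _] Fip] : (\bigcup_(i in [set i | A i /\ F i `&` U !=set0]) F i) p.
  apply: (closed_bigcup finS) => [i [Ai _]|B pB]; first exact: cF.
  have [q [[i Ai Fiq] [Bq Uq]]] := clp _ (filterI pB pU).
  by exists q; split=> //; exists i => //; split=> //; exists q.
by exists i.
Qed.

Lemma finite_int_ball (K : nat) : finite_set [set m : int | (`|m| < K)%N].
Proof.
have fin := finite_image (fun k : nat => k%:Z - K%:Z) (finite_II K.*2).
apply: (sub_finite_set _ fin).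
by move=> m /= mK; exists (absz (m + K%:Z)); rewrite /=; lia.
Qed.

Lemma walk_sub_preorder (G E : Rl -> Rl -> Prop) :
    (forall x, E x x) -> (forall x y z, E x y -> E y z -> E x z) ->
    (forall x y, G x y -> E x y) ->
  forall n x y, walk G n x y -> E x y.
Proof.
move=> Erefl Etrans GE; elim=> [|n IHn] x y /=; first by move=> ->.
by move=> [z [Gxz wzy]]; apply: Etrans (GE _ _ Gxz) (IHn _ _ wzy).
Qed.

Lemma vitali_refl x : vitali x x.
Proof. by exists 0; rewrite subrr rmorph0. Qed.

Lemma vitali_trans x y z : vitali x y -> vitali y z -> vitali x z.
Proof.
move=> [q xyq] [r yzr]; exists (q + r).
by rewrite rmorphD /= -xyq -yzr addrA subrK.
Qed.

Lemma ratr_mul_denq (R : numFieldType) (r : rat) :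
  (denq r)%:~R * ratr r = (numq r)%:~R :> R.
Proof. by rewrite /ratr mulrC divfK // intr_eq0 denq_neq0. Qed.

Definition vitali_index : set (nat * int) := [set i | (0 < i.1)%N /\ i.2 != 0].

Definition vitali_edges (i : nat * int) : set (Rl * Rl) :=
  [set p | i.1%:R <= `|p| /\ i.1%:R * (p.2 - p.1) = i.2%:~R].

Definition vitali_graph (x y : Rl) : Prop :=
  (\bigcup_(i in vitali_index) vitali_edges i) (x, y).

Lemma closed_vitali_edges i : closed (vitali_edges i).
Proof.
apply: closedI.
  apply: (preimage_closed _ (@closed_ge Rl _)) => p _.
  exact: (@norm_continuous Rl (Rl^o * Rl^o)%type).
apply: (preimage_closed (f := fun p : Rl * Rl => i.1%:R * (p.2 - p.1))
  (D := [set x | x = i.2%:~R])); last exact: closed_eq.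
move=> p _; apply: cvgM; first exact: cvg_cst.
by apply: (@cvgB Rl Rl^o); [exact: cvg_snd | exact: cvg_fst].
Qed.

Lemma vitali_edges_locally_finite (p : Rl * Rl) :
  finite_set [set i | vitali_index i /\ vitali_edges i `&` ball p 1 !=set0].
Proof.
set c := `|p.1| + `|p.2| + 1.
have c_ge1 : 1 <= c.
  by rewrite /c; have := normr_ge0 p.1; have := normr_ge0 p.2; lra.
have [N cN] : exists N : nat, 2 * c ^+ 2 < N%:R.
  exists (Num.Def.archi_bound (2 * c ^+ 2)).
  by apply: archi_boundP; rewrite mulr_ge0 // sqr_ge0.
apply: (sub_finite_set _ (finite_setX (finite_II N) (finite_int_ball N))).
move=> [d m] [_ [q [[/= dq dqm] [pq1 pq2]]]].
have {}pq1 : `|p.1 - q.1| < 1 := pq1.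
have {}pq2 : `|p.2 - q.2| < 1 := pq2.
have q1c : `|q.1| <= c.
  by have := lerB_dist q.1 p.1; rewrite distrC /c; have := normr_ge0 p.2; lra.
have q2c : `|q.2| <= c.
  by have := lerB_dist q.2 p.2; rewrite distrC /c; have := normr_ge0 p.1; lra.
have dc : d%:R <= c by apply: le_trans dq _; rewrite prod_normE ge_max q1c q2c.
have mc : `|m%:~R| <= c * (2 * c) :> Rl.
  rewrite -dqm normrM ger0_norm //; apply: ler_pM => //.
  by have := ler_normB q.2 q.1; lra.
split; rewrite /= -(ltr_nat Rl); first by nra.
by rewrite natr_absz intr_norm; nra.
Qed.

Lemma closed_vitali_graph : closed [set p : Rl * Rl | vitali_graph p.1 p.2].
Proof.
have -> : [set p : Rl * Rl | vitali_graph p.1 p.2] =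
    \bigcup_(i in vitali_index) vitali_edges i by apply/seteqP; split=> -[].
apply: closed_bigcup_locally_finite => [i _|p].
  exact: closed_vitali_edges.
by exists (ball p 1); [exact: nbhsx_ballx | exact: vitali_edges_locally_finite].
Qed.

Lemma vitali_graph_sym x y : vitali_graph x y -> vitali_graph y x.
Proof.
move=> [[d m] [/= d0 m0] [/= dxy xym]].
exists (d, - m); first by rewrite /vitali_index /= oppr_eq0.
split=> /=; first by rewrite (le_trans dxy) // !prod_normE /= maxC.
by rewrite mulrNz -xym -mulrN opprB.
Qed.

Lemma vitali_graph_irrefl x : ~ vitali_graph x x.
Proof.
move=> [[d m] [/= _ m0] [_ /=]]; rewrite subrr mulr0 => /esym/eqP.
by rewrite intr_eq0 (negPf m0).
Qed.

Lemma vitali_graph_intro (d : nat) (m : int) x y :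
    (0 < d)%N -> x != y -> d%:R <= Num.max `|x| `|y| ->
    d%:R * (y - x) = m%:~R -> vitali_graph x y.
Proof.
move=> d0 xy dxy xym; exists (d, m); last by split; rewrite //= prod_normE.
split => //=; apply: contraNneq xy => m0; move: xym; rewrite m0 mulr0z => /eqP.
by rewrite mulf_eq0 pnatr_eq0 gtn_eqF //= subr_eq0 eq_sym.
Qed.

Lemma vitali_graph_max_ge1 x y : vitali_graph x y -> 1 <= Num.max `|x| `|y|.
Proof.
move=> [[d m] [/= d0 _] [/= + _]]; rewrite prod_normE; apply: le_trans.
by rewrite ler1n.
Qed.

Lemma vitali_graph_vitali x y : vitali_graph x y -> vitali x y.
Proof.
move=> [[d m] [/= d0 _] [_ /= xym]]; exists (- (m%:Q / d%:R)).
rewrite rmorphN fmorph_div rmorph_int rmorph_nat -xym [_ * (y - x)]mulrC.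
rewrite mulfK ?opprB //.
by rewrite pnatr_eq0 gtn_eqF.
Qed.

Lemma gconnected_vitali_graph x y : gconnected vitali_graph x y -> vitali x y.
Proof.
move=> [n]; apply: walk_sub_preorder n x y.
- exact: vitali_refl.
- exact: vitali_trans.
- exact: vitali_graph_vitali.
Qed.

Lemma vitali_walk2 x y : vitali x y -> walk vitali_graph 2 x y.
Proof.
move=> [q xyq]; set r := - q.
have yxr : y - x = ratr r by rewrite rmorphN /= -xyq opprB.
set d := `|denq r|%N.
have d_gt0 : (0 < d)%N by rewrite absz_gt0 denq_neq0.
have dyx : d%:R * (y - x) = (numq r)%:~R.
  by rewrite yxr natr_absz gtr0_norm ?denq_gt0 // ratr_mul_denq.
have [N xyN] : exists N : nat, `|x| + `|y| + d%:R < N%:R.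
  by exists (Num.Def.archi_bound (`|x| + `|y| + d%:R)); apply: archi_boundP.
have d_ge1 : 1 <= d%:R :> Rl by rewrite ler1n.
have zy : `|y| + d%:R < `|x + N%:R|.
  have := ler_norm (x + N%:R); have := ler_norm (- x); rewrite normrN.
  by have := normr_ge0 y; lra.
exists (x + N%:R); split.
  apply: (@vitali_graph_intro 1 N) => //.
  - by apply/negP => /eqP xN; have := normr_ge0 x; have := normr_ge0 y; lra.
  - by rewrite le_max; apply/orP; right; have := normr_ge0 y; lra.
  - by rewrite mul1r addrAC subrr add0r.
exists y; split=> //.
apply: (@vitali_graph_intro d (numq r - d%:Z * N%:Z)) => //.
- by apply/negP => /eqP zyE; rewrite zyE in zy; lra.
- by rewrite le_max; apply/orP; left; have := normr_ge0 y; lra.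
- by rewrite rmorphB rmorphM /= -dyx; ring.
Qed.

Lemma vitali_0_half : vitali 0 2^-1.
Proof.
by exists (- 2^-1); rewrite sub0r rmorphN fmorphV /= (rmorph_nat (@ratr Rl) 2).
Qed.

Lemma no_short_walk_0_half n : (n <= 1)%N -> ~ walk vitali_graph n 0 2^-1.
Proof.
have half_gt0 : (0 : Rl) < 2^-1 by rewrite invr_gt0 ltr0n.
have half_lt1 : (2^-1 : Rl) < 1 by rewrite invf_lt1 ?ltr0n // ltr1n.
case: n => [|[|//]] _ /=; first by move=> h; move: half_gt0; rewrite -h ltxx.
move=> [z [/vitali_graph_max_ge1 z_ge1 zE]]; move: z_ge1; rewrite zE.
by rewrite normr0 gtr0_norm // le_max ler10 /=; lra.
Qed.

Theorem proposition3p9 : closed_graphable_diam vitali 2.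
Proof.
have connE x y : gconnected vitali_graph x y <-> vitali x y.
  by split=> [|/vitali_walk2 w]; [exact: gconnected_vitali_graph | exists 2%N].
exists vitali_graph; split.
- by split; [exact: vitali_graph_sym | exact: vitali_graph_irrefl].
- exact: closed_vitali_graph.
- exact: connE.
- by move=> x y /connE/vitali_walk2 w; exists 2%N.
move=> j diam_j.
have [n [n_le_j w]] := diam_j 0 2^-1 (proj2 (connE _ _) vitali_0_half).
rewrite leqNgt; apply/negP => j_lt2.
apply: (@no_short_walk_0_half n) w.
by apply: leq_trans n_le_j _; rewrite -ltnS.
Qed.
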